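(* Let $d\ge 2$ and $R \subseteq \{0,1,\dots,d-1\}$ with $0 \in R$. Let $m^\star \in \mathcal{M}^s_d(R)$ be an optimal symmetric $R$-estimator, i.e. $\|m^\star - \textsc{max}\|_\infty = \min_{m\in\mathcal{M}_d^s(R)}\|m-\textsc{max}\|_\infty$. For $0\le\epsilon < \mathrm{err}(R)/2$ let $$W(\epsilon; R) = \{x \in [0,1]^d : |x_{(1)} - m^\star(x)| \ge \epsilon\}.$$ Then $\mathrm{vol}(W(\epsilon; R)) \ge (\mathrm{err}(R)/2 - \epsilon)^d$, where $\mathrm{vol}$ is Lebesgue measure on $[0,1]^d$.
   Context: For $x\in\mathbb{R}^d$ and nonempty $A\subseteq\{1,\dots,d\}$, $s(x;A)=\max\{x_j:j\in A\}$. $C(k,r,d)$ is the $k$-th $r$-element subset of $\{1,\dots,d\}$ in lexicographic order. For $R\subseteq\{0,\dots,d-1\}$, $\mathcal{M}_d(R)$ is the set of functions $x\mapsto \beta_0+\sum_{r\in R\setminus\{0\}}\sum_{j=1}^{\binom dr}\beta_r^j s(x;C(j,r,d))$ with real coefficients, the intercept $\beta_0$ being present iff $0\in R$. $\mathcal{M}_d^s(R)$ is the subset of $\mathcal{M}_d(R)$ of functions invariant under every permutation of their $d$ arguments. $\textsc{max}(x)=\max_i x_i = x_{(1)}$, $\|\cdot\|_\infty$ is the sup norm over $[0,1]^d$, and $\mathrm{err}(R)=\min_{m\in\mathcal{M}_d(R)}\|m-\textsc{max}\|_\infty$. *)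

From HB Require Import structures.
From mathcomp Require Import all_boot all_order all_algebra all_fingroup.
From mathcomp Require Import all_classical all_reals all_analysis.
Set Implicit Arguments. Unset Strict Implicit. Unset Printing Implicit Defensive.
Import Order.TTheory GRing.Theory Num.Theory.
Local Open Scope classical_set_scope.
Local Open Scope ring_scope.

Section Defs.
Variables (R : realType) (d : nat).

(* s(x;A) = max { x_j : j in A }  (A nonempty; value 0 for A empty, never used) *)
Definition smax (A : {set 'I_d}) (x : 'I_d -> R) : R :=
  match [pick i in A] with
  | Some i0 => \big[Num.max/x i0]_(i in A) x i
  | None => 0
  end.

Definition maxfun (x : 'I_d -> R) : R := smax [set: 'I_d] x.

(* M_d(R): beta_0 (present iff 0 \in Rs) + sum over nonempty subsets A with
   |A| in Rs of beta_A * s(x;A).  The coefficient beta_A stands for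
   beta_r^j where A = C(j,r,d), r = |A|. *)
Definition inM (Rs : {pred nat}) (m : ('I_d -> R) -> R) : Prop :=
  exists (b0 : R) (beta : {set 'I_d} -> R), forall x,
    m x = (if 0%N \in Rs then b0 else 0)
          + \sum_(A : {set 'I_d} | (0 < #|A|)%N && (#|A| \in Rs)) beta A * smax A x.

Definition symmetric_fun (m : ('I_d -> R) -> R) : Prop :=
  forall (s : {perm 'I_d}) (x : 'I_d -> R), m (fun i => x (s i)) = m x.

Definition inMs (Rs : {pred nat}) (m : ('I_d -> R) -> R) : Prop :=
  inM Rs m /\ symmetric_fun m.

Definition cube : set ('I_d -> R) := [set x | forall i, 0 <= x i <= 1].

Definition supnorm (f : ('I_d -> R) -> R) : R := sup [set `|f x| | x in cube].

Definition err (Rs : {pred nat}) : R :=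
  inf [set supnorm (fun x => m x - maxfun x) | m in inM Rs].

Definition Wset (mstar : ('I_d -> R) -> R) (eps : R) : set ('I_d -> R) :=
  [set x | cube x /\ eps <= `|maxfun x - mstar x|].

Definition box (a b : 'I_d -> R) : set ('I_d -> R) :=
  [set x | forall i, a i <= x i <= b i].
Definition boxvol (a b : 'I_d -> R) : R := \prod_(i < d) (b i - a i).

Definition box_covers (S : set ('I_d -> R)) :
    set ((nat -> 'I_d -> R) * (nat -> 'I_d -> R)) :=
  [set ab | (forall k i, ab.1 k i <= ab.2 k i) /\
            S `<=` \bigcup_k box (ab.1 k) (ab.2 k)].

Definition lebesgue_outer (S : set ('I_d -> R)) : \bar R :=
  ereal_inf [set (\sum_(0 <= k <oo) (boxvol (ab.1 k) (ab.2 k))%:E)%E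
            | ab in box_covers S].
End Defs.
Arguments inM {R d} Rs m.
Arguments inMs {R d} Rs m.
Arguments supnorm {R d} f.
Arguments maxfun {R d} x.
Arguments err {R} d Rs.
Arguments Wset {R d} mstar eps.
Arguments lebesgue_outer {R d} S.

From HB Require Import structures.
From mathcomp Require Import all_boot all_order all_algebra all_fingroup.
From mathcomp Require Import all_classical all_reals all_analysis.
From mathcomp Require Import measurable_realfun lra.

Set Implicit Arguments.
Unset Strict Implicit.
Unset Printing Implicit Defensive.
Import Order.TTheory GRing.Theory Num.Theory.
Local Open Scope classical_set_scope.
Local Open Scope ring_scope.

(* Every m in M_d(R) is an affine combination of maxima s(x;A), and on the
   cube s(x;A) is the integral over t in [0,1) of [exists j in A, t < x_j].
   Hence on [0,1]^d both m and m - MAX are convex combinations of their values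
   at the vertices 1_c, the vertex 1_c carrying the length of the set of t in
   [0,1) whose superlevel set {i | t < x_i} is c (the Lovasz extension).  So
   M = ||m* - MAX||_oo is attained at a vertex 1_c, err(R) <= M, and M <= 1/2
   because the constant 1/2 is a symmetric competitor.  On the box of side
   r = err(R)/2 - eps at 1_c the weight of c is at least 1 - 2r, which gives
   |m* - MAX| >= M (1 - 4r) >= M - 2r >= 2 eps there; and a box of side r has
   outer measure at least r^d, by integrating a cover one coordinate at a
   time. *)

Section BoxVolume.
Variables (R : realType) (d : nat).
Local Notation lam := (@lebesgue_measure R).

Lemma nneseries_ge_term (u : (\bar R)^nat) k : (forall n, (0 <= u n)%E) ->
  (u k <= \sum_(n <oo) u n)%E.
Proof.
move=> u0; rewrite (nneseriesD1 _ (P:=xpredT) (n:=k)) // leeDl //.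
by apply: nneseries_ge0 => n _ _; exact: u0.
Qed.

Lemma weighted_interval_cover (v a b : nat -> R) (lo r c : R) :
  (forall k, 0 <= v k) -> (forall k, a k <= b k) -> 0 <= r ->
  (forall t, lo <= t <= lo + r ->
     (c%:E <= \sum_(k <oo) (v k * \1_(`[a k, b k]%classic) t)%:E)%E) ->
  ((c * r)%:E <= \sum_(k <oo) (v k * (b k - a k))%:E)%E.
Proof.
move=> v0 ab r0 cover.
have [c0|c0] := leP c 0.
  apply: le_trans (nneseries_ge0 _) => [|n _ _]; first by rewrite lee_fin mulr_le0_ge0.
  by rewrite lee_fin mulr_ge0 // subr_ge0.
set D := `[lo, lo + r]%classic.
have mD : measurable D by exact: measurable_itv.
have lamD : lam D = r%:E.
  rewrite lebesgue_measure_itv /= lte_fin.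
  by case: ltP => [_|r_le0]; rewrite ?(-EFinD); congr _%:E; lra.
have F_ge0 k t : (0 <= (v k * \1_(`[a k, b k]%classic) t)%:E)%E.
  by rewrite lee_fin mulr_ge0.
have mF k : measurable_fun D (fun t => (v k * \1_(`[a k, b k]%classic) t)%:E).
  by apply/measurable_EFinP; apply: measurable_funM.
rewrite EFinM -lamD -integral_cst //=.
apply: (@le_trans _ _
    (\int[lam]_(t in D) \sum_(k <oo) (v k * \1_(`[a k, b k]%classic) t)%:E)%E).
  apply: ge0_le_integral => //; first by move=> t _; rewrite lee_fin ltW.
  by apply: ge0_emeasurable_sum => [k t _ _|k _]; [exact: F_ge0|exact: mF].
rewrite integral_nneseries //; apply: lee_nneseries => [n _ _|n _].
  exact: integral_ge0.
rewrite (@integralZl_indic _ _ _ lam D mD (fun _ => `[a n, b n]%classic)) //; last first.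
  by move=> vn; have := v0 n; rewrite leNgt vn.
rewrite integral_indic // EFinM lee_wpmul2l ?lee_fin //.
apply: (@le_trans _ _ (lam `[a n, b n]%classic)); first exact: measureIl.
by rewrite lebesgue_measure_itv /= lte_fin; case: ltP => // _; rewrite lee_fin subr_ge0.
Qed.

Lemma weighted_box_cover (a b : nat -> 'I_d -> R) (lo : 'I_d -> R) (r : R)
    (S : {set 'I_d}) (w : nat -> R) (c : R) :
  (forall k i, a k i <= b k i) -> 0 <= r -> (forall k, 0 <= w k) ->
  (forall x, box lo (fun i => lo i + r) x ->
     (c%:E <= \sum_(k <oo)
                (w k * \prod_(i in S) \1_(`[a k i, b k i]%classic) (x i))%:E)%E) ->
  ((c * r ^+ #|S|)%:E <= \sum_(k <oo) (w k * \prod_(i in S) (b k i - a k i))%:E)%E.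
Proof.
move=> ab r0; have [n cardS] : exists n, #|S| = n by exists #|S|.
(* Integrate out one coordinate j of S at a time; its length factor
   b k j - a k j is absorbed into the weights. *)
rewrite cardS; elim: n S w c cardS => [|n IH] S w c cardS w0 cover.
  move/eqP: cardS; rewrite cards_eq0 => /eqP S0; subst S; rewrite expr0 mulr1.
  apply: le_trans (cover lo _) _ => [i|]; first by rewrite lexx lerDl.
  by apply: lee_nneseries => [k _ _|k _]; rewrite !big_set0 ?mulr1 ?lee_fin.
have [j jS] : exists j, j \in S by apply/card_gt0P; rewrite cardS.
have cardS' : #|S :\ j| = n by move: cardS; rewrite (cardsD1 j S) jS add1n => -[].
rewrite exprS mulrA; under eq_eseriesr do rewrite (big_setD1 _ jS) mulrA.
apply: IH => // [k|x x_box]; first by rewrite mulr_ge0 // subr_ge0.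
pose v k := w k * \prod_(i in S :\ j) \1_(`[a k i, b k i]%classic) (x i).
have v_ge0 k : 0 <= v k by rewrite mulr_ge0 // prodr_ge0 // => i _; rewrite indicE.
have := weighted_interval_cover (lo := lo j) (c := c) v_ge0 (ab^~ j) r0.
under [in X in X -> _]eq_eseriesr do rewrite /v mulrAC.
apply=> t t_itv; pose x' i := if i == j then t else x i.
have x'_box : box lo (fun i => lo i + r) x'.
  by move=> i; rewrite /x'; case: eqP => [->|_] //; exact: x_box.
apply: le_trans (cover x' x'_box) _; apply: lee_nneseries => k _.
  by rewrite lee_fin mulr_ge0 // prodr_ge0 // => i _; rewrite indicE.
rewrite (big_setD1 _ jS) /= mulrA /x' eqxx.
rewrite (eq_bigr (fun i => \1_(`[a k i, b k i]%classic) (x i))); first by rewrite /v mulrAC.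
by move=> i /setD1P[/negPf ->].
Qed.

Lemma lebesgue_outer_box_ge (lo : 'I_d -> R) (r : R) (S : set ('I_d -> R)) :
  0 <= r -> box lo (fun i => lo i + r) `<=` S ->
  ((r ^+ d)%:E <= lebesgue_outer S)%E.
Proof.
move=> r0 boxS; apply: le_ereal_inf_tmp => _ [[a b] /= [ab cover] <-].
have := @weighted_box_cover a b lo r [set: 'I_d]%SET (fun=> 1) 1 ab r0 (fun=> ler01).
rewrite cardsT card_ord mul1r => vol_le.
apply: le_trans (vol_le _) _ => [x /boxS/cover [k _ x_boxk]|].
  under eq_eseriesr do rewrite mul1r.
  pose u : (\bar R)^nat :=
    fun k => (\prod_(i in [set: 'I_d]%SET) \1_(`[a k i, b k i]%classic) (x i))%:E.
  apply: le_trans (nneseries_ge_term (u := u) k _) => [|n].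
    by rewrite /u big1 // => i _; rewrite indicE mem_set //= in_itv x_boxk.
  by rewrite lee_fin prodr_ge0 // => i _; rewrite indicE.
apply: lee_nneseries => [n _ _|n _]; rewrite mul1r.
  by rewrite lee_fin prodr_ge0 // => i _; rewrite subr_ge0.
by rewrite /boxvol (eq_bigl xpredT) // => i; rewrite inE.
Qed.

End BoxVolume.

Section CornerInterpolation.
Variables (R : realType) (d : nat).
Local Notation lam := (@lebesgue_measure R).
Implicit Types (x : 'I_d -> R) (A c cs : {set 'I_d}) (F G : ('I_d -> R) -> R).

Lemma le_smax A x i : i \in A -> x i <= smax A x.
Proof.
move=> iA; rewrite /smax; case: pickP => [i0 _|/(_ i)]; last by rewrite iA.
by rewrite (bigD1 i) //= le_max lexx.
Qed.

Lemma smax_attained A x i : i \in A -> exists2 j, j \in A & smax A x = x j.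
Proof.
move=> iA; rewrite /smax; case: pickP => [i0 i0A|/(_ i)]; last by rewrite iA.
apply: (big_ind (fun v => exists2 j, j \in A & v = x j)) => [|_ _ [j1 j1A ->] [j2 j2A ->]|j jA].
- by exists i0.
- by rewrite /Num.max; case: ifP => _; [exists j2|exists j1].
- by exists j.
Qed.

Lemma smax_cube A x : cube x -> (0 < #|A|)%N -> 0 <= smax A x <= 1.
Proof.
move=> x01 /card_gt0P[i iA]; have [j _ ->] := smax_attained x iA.
exact: x01.
Qed.

Definition corner c : 'I_d -> R := fun i => (i \in c)%:R.

Lemma corner_cube c : cube (corner c).
Proof. by move=> i; rewrite /corner; case: (i \in c); rewrite /= ?lexx ?ler01. Qed.

Lemma smax_corner A c : (0 < #|A|)%N ->
  smax A (corner c) = ([exists i in A, i \in c] : bool)%:R.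
Proof.
case/card_gt0P => i iA; have [j jA smaxE] := smax_attained (corner c) iA.
rewrite smaxE /corner; case: existsP => [[k /andP[kA kc]]|no_k].
  have := le_smax (corner c) kA; rewrite smaxE /corner kc.
  by case: (j \in c) => //=; rewrite ler10.
by case jc: (j \in c) => //; case: no_k; exists j; rewrite jA jc.
Qed.

Definition superlevel x t : {set 'I_d} := [set i | t < x i].

Definition superlevel_times x c : set R :=
  [set t | 0 <= t < 1 /\ superlevel x t = c].

Lemma measurable_superlevel_times x c : measurable (superlevel_times x c).
Proof.
have -> : superlevel_times x c = `[0, 1[%classic `&`
    \bigcap_(i in [set: 'I_d])
      (if i \in c then `]-oo, x i[%classic else `[x i, +oo[%classic).
  apply/seteqP; split => t.
    move=> [t01 <-]; split; first by rewrite /= in_itv.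
    by move=> i _; rewrite inE; case: ltP; rewrite /= in_itv /= ?andbT.
  move=> [t01 t_in]; split; first by move: t01; rewrite /= in_itv.
  apply/setP => i; rewrite inE; have := t_in i I.
  case: (i \in c); rewrite /= in_itv /= ?andbT => // xi_le.
  by apply/negbTE; rewrite -leNgt.
apply: measurableI; first exact: measurable_itv.
apply: fin_bigcap_measurable; first exact: finite_finset.
by move=> i _; case: ifP => _; exact: measurable_itv.
Qed.

Lemma sum_lebesgue_superlevel_times x (P : pred {set 'I_d}) :
  (\sum_(c | P c) lam (superlevel_times x c))%E =
  lam [set t | 0 <= t < 1 /\ P (superlevel x t)].
Proof.
have -> : [set t | 0 <= t < 1 /\ P (superlevel x t)] =
    \bigcup_(c in [set c | P c]) superlevel_times x c.
  apply/seteqP; split => [t [t01 Pt]|t [c Pc [t01 tc]]]; first by exists (superlevel x t).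
  by split; rewrite ?tc.
rewrite measure_fin_bigcup; last 3 first.
- exact: finite_finset.
- by move=> c c' _ _ [t [[_ <-] [_ <-]]].
- by move=> c _; exact: measurable_superlevel_times.
rewrite (fsbigE [seq c <- enum {set 'I_d} | P c]) //.
- rewrite big_filter_cond big_enum_cond /=; apply: eq_bigl => c.
  by case Pc: (P c) => //=; rewrite mem_set.
- by rewrite filter_uniq // enum_uniq.
- by move=> c /=; rewrite mem_filter => /andP[].
- by move=> c /= Pc; rewrite mem_filter Pc mem_enum.
Qed.

Definition corner_weight x c : R := fine (lam (superlevel_times x c)).

Lemma lebesgue_co01 : lam `[0, 1[%classic = 1%E.
Proof. by rewrite lebesgue_measure_itv /= lte_fin ltr01 oppr0 adde0. Qed.

Lemma lebesgue_superlevel_times x c :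
  lam (superlevel_times x c) = (corner_weight x c)%:E.
Proof.
rewrite /corner_weight fineK // ge0_fin_numE //.
apply: (@le_lt_trans _ _ (lam `[0, 1[%classic)); last by rewrite lebesgue_co01 ltry.
apply: le_measure; rewrite ?inE; [exact: measurable_superlevel_times|exact: measurable_itv|].
by move=> t [t01 _]; rewrite /= in_itv.
Qed.

Lemma corner_weight_ge0 x c : 0 <= corner_weight x c.
Proof. exact: fine_ge0. Qed.

Lemma sum_corner_weight x (P : pred {set 'I_d}) :
  (\sum_(c | P c) corner_weight x c)%:E =
  lam [set t | 0 <= t < 1 /\ P (superlevel x t)].
Proof.
rewrite -sum_lebesgue_superlevel_times -sumEFin.
by apply: eq_bigr => c _; rewrite lebesgue_superlevel_times.
Qed.

Lemma sum_corner_weight1 x : \sum_c corner_weight x c = 1.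
Proof.
have := sum_corner_weight x xpredT.
have -> : [set t | 0 <= t < 1 /\ xpredT (superlevel x t)] = `[0, 1[%classic.
  by apply/seteqP; split => t /=; rewrite in_itv /=; [case|split].
by rewrite lebesgue_co01 => -[].
Qed.

Lemma smax_corner_interpolation A x : cube x -> (0 < #|A|)%N ->
  \sum_c corner_weight x c * smax A (corner c) = smax A x.
Proof.
move=> x01 A_gt0; under eq_bigr do rewrite smax_corner //.
rewrite (eq_bigr (fun c => if [exists i in A, i \in c] then corner_weight x c else 0));
  last by move=> c _; case: ifP; rewrite ?mulr1 ?mulr0.
rewrite -big_mkcond /=.
apply: EFin_inj; rewrite sum_corner_weight.
have /andP[smax_ge0 smax_le1] := smax_cube x01 A_gt0.
have /card_gt0P[i iA] := A_gt0; have [j jA smaxE] := smax_attained x iA.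
have -> : [set t | 0 <= t < 1 /\ [exists i in A, i \in superlevel x t]] =
    `[0, smax A x[%classic.
  apply/seteqP; split => t /=; rewrite in_itv /=.
    move=> [/andP[t0 _] /existsP[k /andP[kA]]]; rewrite inE => t_lt.
    by rewrite t0; exact: lt_le_trans t_lt (le_smax x kA).
  move=> /andP[t0 t_lt]; rewrite t0 (lt_le_trans t_lt smax_le1); split => //.
  by apply/existsP; exists j; rewrite jA inE -smaxE.
rewrite lebesgue_measure_itv /= lte_fin; case: ltP => [_|smax_le0].
  by rewrite oppr0 adde0.
by apply/eqP; rewrite eq_sym eqe eq_le smax_le0.
Qed.

Definition corner_interpolated F :=
  forall x, cube x -> F x = \sum_c corner_weight x c * F (corner c).

Lemma corner_interpolated_cst (b : R) : corner_interpolated (fun=> b).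
Proof. by move=> x _; rewrite -mulr_suml sum_corner_weight1 mul1r. Qed.

Lemma corner_interpolated_smax A : (0 < #|A|)%N -> corner_interpolated (smax A).
Proof. by move=> A_gt0 x x01; rewrite smax_corner_interpolation. Qed.

Lemma corner_interpolatedD F G : corner_interpolated F -> corner_interpolated G ->
  corner_interpolated (fun x => F x + G x).
Proof.
move=> hF hG x x01; rewrite hF // hG // -big_split /=.
by apply: eq_bigr => c _; rewrite mulrDr.
Qed.

Lemma corner_interpolatedB F G : corner_interpolated F -> corner_interpolated G ->
  corner_interpolated (fun x => F x - G x).
Proof.
move=> hF hG x x01; rewrite hF // hG // -sumrB.
by apply: eq_bigr => c _; rewrite mulrBr.
Qed.

Lemma corner_interpolated_sum (I : finType) (P : pred I) (a : I -> R)
    (Fs : I -> ('I_d -> R) -> R) :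
  (forall i, P i -> corner_interpolated (Fs i)) ->
  corner_interpolated (fun x => \sum_(i | P i) a i * Fs i x).
Proof.
move=> hF x x01.
rewrite (eq_bigr (fun i => \sum_c corner_weight x c * (a i * Fs i (corner c)))).
  by rewrite exchange_big; apply: eq_bigr => c _; rewrite mulr_sumr.
move=> i Pi; rewrite (hF i Pi x x01) mulr_sumr.
by apply: eq_bigr => c _; rewrite mulrCA.
Qed.

Lemma corner_interpolated_inM (Rs : {pred nat}) m : inM Rs m -> corner_interpolated m.
Proof.
move=> [b0 [beta mE]]; rewrite (funext mE).
apply: corner_interpolatedD; first exact: corner_interpolated_cst.
by apply: corner_interpolated_sum => A /andP[A_gt0 _]; exact: corner_interpolated_smax.
Qed.

Lemma corner_interpolated_maxfun : (0 < d)%N -> corner_interpolated maxfun.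
Proof. by move=> d_gt0; apply: corner_interpolated_smax; rewrite cardsT card_ord. Qed.

Lemma norm_weighted_le x c F M : (forall c, `|F (corner c)| <= M) ->
  `|corner_weight x c * F (corner c)| <= corner_weight x c * M.
Proof.
move=> FM; rewrite normrM ger0_norm ?corner_weight_ge0 //.
by rewrite ler_wpM2l ?corner_weight_ge0.
Qed.

Lemma norm_le_corner F M x : corner_interpolated F ->
  (forall c, `|F (corner c)| <= M) -> cube x -> `|F x| <= M.
Proof.
move=> hF FM x01; rewrite hF //; apply: le_trans (ler_norm_sum _ _ _) _.
rewrite -[leRHS]mul1r -(sum_corner_weight1 x) mulr_suml.
by apply: ler_sum => c _; exact: norm_weighted_le.
Qed.

Lemma norm_ge_corner F x cs : corner_interpolated F ->
  (forall c, `|F (corner c)| <= `|F (corner cs)|) -> cube x ->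
  `|F (corner cs)| * (2 * corner_weight x cs - 1) <= `|F x|.
Proof.
move=> hF Fcs x01; rewrite [F x]hF // (bigD1 cs) //=; apply: le_trans (lerB_normD _ _).
have weight1 := sum_corner_weight1 x; rewrite (bigD1 cs) //= in weight1.
have rest_le : `|\sum_(c | c != cs) corner_weight x c * F (corner c)| <=
    (\sum_(c | c != cs) corner_weight x c) * `|F (corner cs)|.
  rewrite mulr_suml; apply: le_trans (ler_norm_sum _ _ _) _.
  by apply: ler_sum => c _; exact: norm_weighted_le.
rewrite normrM ger0_norm ?corner_weight_ge0 //; nra.
Qed.

Definition corner_lo cs (r : R) : 'I_d -> R :=
  fun i => if i \in cs then 1 - r else 0.

Definition corner_box cs r : set ('I_d -> R) :=
  box (corner_lo cs r) (fun i => corner_lo cs r i + r).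

Lemma corner_box_cube cs r x : r <= 1 -> corner_box cs r x -> cube x.
Proof.
move=> r_le1 x_box i; have := x_box i; rewrite /corner_lo.
by case: (i \in cs) => /andP[lo_le le_hi]; apply/andP; split; lra.
Qed.

Lemma corner_weight_near cs r x : 0 <= r -> 2 * r <= 1 ->
  corner_box cs r x -> 1 - 2 * r <= corner_weight x cs.
Proof.
move=> r_ge0 r_le x_box; rewrite -lee_fin -lebesgue_superlevel_times.
have -> : (1 - 2 * r)%:E = lam `[r, 1 - r[%classic.
  rewrite lebesgue_measure_itv /= lte_fin.
  by case: ltP => r_lt; rewrite ?(-EFinD); congr _%:E; lra.
apply: le_measure; rewrite ?inE; [exact: measurable_itv|exact: measurable_superlevel_times|].
move=> t /=; rewrite in_itv /= => /andP[r_le_t t_lt]; split; first by apply/andP; split; lra.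
apply/setP => i; rewrite inE; have := x_box i; rewrite /corner_lo.
case: (i \in cs) => /andP[lo_le le_hi]; first by apply: lt_le_trans lo_le; lra.
by apply/negbTE; rewrite -leNgt; lra.
Qed.

Lemma norm_ge_near_corner F cs r x : corner_interpolated F ->
  (forall c, `|F (corner c)| <= `|F (corner cs)|) -> `|F (corner cs)| <= 1 / 2 ->
  0 <= r -> 2 * r <= 1 -> corner_box cs r x ->
  `|F (corner cs)| - 2 * r <= `|F x|.
Proof.
move=> hF Fcs F_le_half r_ge0 r_le x_box.
have x01 : cube x by apply: corner_box_cube x_box; lra.
have w_ge := corner_weight_near r_ge0 r_le x_box.
have := norm_ge_corner hF Fcs x01.
have M_ge0 := normr_ge0 (F (corner cs)); nra.
Qed.

End CornerInterpolation.
Arguments corner {R d} c.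

Section Supnorm.
Variables (R : realType) (d : nat).
Implicit Types (F m : ('I_d -> R) -> R) (Rs : {pred nat}).

Lemma supnorm_le F M : (forall x, cube x -> `|F x| <= M) -> supnorm F <= M.
Proof.
move=> FM; apply: ge_sup => [|_ [x x01 <-]]; last exact: FM.
by exists `|F (fun=> 0)|, (fun=> 0) => // i; rewrite lexx ler01.
Qed.

Lemma supnorm_corner F : corner_interpolated F ->
  exists cs, (forall c, `|F (corner c)| <= `|F (corner cs)|) /\
             supnorm F = `|F (corner cs)|.
Proof.
move=> hF; have [cs _ cs_max] :=
  @arg_maxP _ _ _ (finset.set0 : {set 'I_d}) xpredT (fun c => `|F (corner c)|) isT.
have {}cs_max c : `|F (corner c)| <= `|F (corner cs)| by exact: cs_max.
have F_le x : cube x -> `|F x| <= `|F (corner cs)| by exact: norm_le_corner.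
exists cs; split => //; apply/eqP; rewrite eq_le supnorm_le //=.
apply: ub_le_sup; first by exists `|F (corner cs)| => _ [x x01 <-]; exact: F_le.
by exists (corner cs) => //; exact: corner_cube.
Qed.

Lemma err_le_supnorm Rs m : (0 < d)%N -> inM Rs m ->
  err d Rs <= supnorm (fun x => m x - maxfun x).
Proof.
move=> d_gt0 m_inM; apply: ge_inf; last by exists m.
exists 0 => _ [m' /corner_interpolated_inM m'_interp <-].
have [cs [_ ->]] := supnorm_corner
  (corner_interpolatedB m'_interp (corner_interpolated_maxfun d_gt0)).
exact: normr_ge0.
Qed.

Lemma inMs_cst Rs (b : R) : 0%N \in Rs -> inMs Rs (fun _ : 'I_d -> R => b).
Proof.
move=> Rs0; split => // ; exists b, (fun=> 0) => x.
by rewrite Rs0 big1 ?addr0 // => A _; rewrite mul0r.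
Qed.

Lemma supnorm_half_sub_maxfun : (0 < d)%N ->
  supnorm (fun x : 'I_d -> R => 1 / 2 - maxfun x) <= 1 / 2.
Proof.
move=> d_gt0; apply: supnorm_le => x x01.
have /andP[max_ge0 max_le1] : 0 <= maxfun x <= 1.
  by apply: smax_cube; rewrite ?cardsT ?card_ord.
by rewrite ler_norml; apply/andP; split; lra.
Qed.

End Supnorm.

Theorem lemma4 (R : realType) (d : nat) (Rs : {pred nat})
  (mstar : ('I_d -> R) -> R) (eps : R) :
  (2 <= d)%N ->
  (forall r, r \in Rs -> (r < d)%N) ->
  0%N \in Rs ->
  inMs Rs mstar ->
  (forall m : ('I_d -> R) -> R, inMs Rs m ->
     supnorm (fun x => mstar x - maxfun x) <= supnorm (fun x => m x - maxfun x)) ->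
  0 <= eps -> eps < err d Rs / 2 ->
  (((err d Rs / 2 - eps) ^+ d)%:E <= lebesgue_outer (Wset mstar eps))%E.
Proof.
move=> d_ge2 _ Rs0 [mstar_inM _] mstar_opt eps_ge0 eps_lt.
have d_gt0 : (0 < d)%N by exact: leq_trans d_ge2.
set g := fun x => mstar x - maxfun x.
have g_interp : corner_interpolated g.
  apply: corner_interpolatedB; first exact: corner_interpolated_inM mstar_inM.
  exact: corner_interpolated_maxfun.
have [cs [cs_max g_sup]] := supnorm_corner g_interp.
have err_le : err d Rs <= `|g (corner cs)| by rewrite -g_sup; exact: err_le_supnorm.
have g_le_half : `|g (corner cs)| <= 1 / 2.
  rewrite -g_sup; apply: le_trans (mstar_opt (fun=> 1 / 2) _) _; first exact: inMs_cst.
  exact: supnorm_half_sub_maxfun.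
pose r := err d Rs / 2 - eps.
have r_gt0 : 0 < r by rewrite /r; lra.
have r_le : 2 * r <= 1 by rewrite /r; lra.
apply: (lebesgue_outer_box_ge (lo := corner_lo cs r) (ltW r_gt0)) => x x_box.
split; first by apply: corner_box_cube x_box; lra.
rewrite distrC -/(g x).
have := norm_ge_near_corner g_interp cs_max g_le_half (ltW r_gt0) r_le x_box.
rewrite /r; lra.
Qed.
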